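(* Let $C,D,E$ be category presentations and $P:C\nrightarrow D$, $Q:D\nrightarrow E$ curried profunctor presentations. There is an isomorphism of profunctors $\mu^{P,Q}:[\![P]\!]\odot[\![Q]\!]\to[\![P\circledast Q]\!]$ in $\mathbf{Prof}([\![C]\!],[\![E]\!])$, given on components by $\langle[s],[t]\rangle\mapsto[s\otimes t]$ for terms $s:d$ of $P(c)$ and $t:e$ of $Q(d)$, which is natural in $P\in\mathbf{Curr}(C,D)$ and $Q\in\mathbf{Curr}(D,E)$. Furthermore, if $P$ and $Q$ are finite then $P\circledast Q$ is finite. In particular, if $\mathcal P:[\![C]\!]\nrightarrow[\![D]\!]$ and $\mathcal Q:[\![D]\!]\nrightarrow[\![E]\!]$ are finitely curried presentable, then so is $\mathcal P\odot\mathcal Q$.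
   Context: Category presentations $C$: sorts, function symbols $f:c\to c'$, equations $C_E$ between parallel paths (paths: composable lists $f_1.\cdots.f_n$ or empty $1_c$); finite if all these sets are finite. $\approx_C$: smallest equivalence relation on paths containing $C_E$ closed under concatenation with composable function symbols. $[\![C]\!]$: objects the sorts, morphisms $\approx_C$-classes $[p]$. Profunctors: $\mathcal P:\mathcal C\nrightarrow\mathcal D$ is a functor $\mathcal C^{op}\times\mathcal D\to\mathbf{Set}$ (equivalently a category over $\mathbf 2=\{0\to1\}$ with fibres $\mathcal C,\mathcal D$); $\mathbf{Prof}(\mathcal C,\mathcal D)$ has natural transformations as morphisms. Composition: $(\mathcal P\odot\mathcal Q)(c,e)$ is $\coprod_{d}\mathcal P(c,d)\times\mathcal Q(d,e)$ modulo the equivalence relation generated by $(p,\mathcal Q(g,1)(q'))\sim(\mathcal P(1,g)(p),q')$ for $g:d\to d'$ in $\mathcal D$, $p\in\mathcal P(c,d)$, $q'\in\mathcal Q(d',e)$; the class of $(p,q)$ is $\langle p,q\rangle$; $(\mathcal P\odot\mathcal Q)(f,h)\langle p,q\rangle=\langle\mathcal P(f,1)p,\mathcal Q(1,h)q\rangle$. Instance presentations: a $D$-instance presentation $I$ has generators $x:d$ and equations $I_E$ between terms $x.g$ ($g$ a $D$-path); finite if generators and equations are finite. $\approx_I$: smallest equivalence relation on terms containing $I_E$, closed under right concatenation with $D$-function symbols, identifying $t.p$ and $t.q$ for every equation $p=q$ of $D_E$. $[\![I]\!]:[\![D]\!]\to\mathbf{Set}$ sends $d$ to $\approx_I$-classes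 of terms of type $d$, $[g]$ acting by $[t]\mapsto[t.g]$. A morphism $F:I\to J$ sends generators $x:d$ to terms $F(x):d$ with $F(x).g\approx_J F(y).h$ for every equation $x.g=y.h$ in $I_E$; $F(x.g):=F(x).g$; $F\approx G$ iff $F(x)\approx_J G(x)$ for all $x$. Curried presentations: $P:C\nrightarrow D$ assigns a $D$-instance presentation $P(c)$ to each sort $c$ and a $D$-instance morphism $P(f):P(c')\to P(c)$ to each function symbol $f:c\to c'$, with $P(p)\approx P(p')$ for each equation $p=p'$ of $C_E$, where $P(f_1.\cdots.f_n):=P(f_n)\circ\cdots\circ P(f_1)$. Finite if $C,D$ and all $P(c)$ are finite. Morphisms $F:P\to P'$: families of $D$-instance morphisms $F_c:P(c)\to P'(c)$ with $F_c\circ P(f)\approx P'(f)\circ F_{c'}$ for each function symbol $f:c\to c'$; category $\mathbf{Curr}(C,D)$. Semantics: $[\![P]\!](c,d)=[\![P(c)]\!](d)$, with $[f]$ acting by $[t]\mapsto[P(f)(t)]$ and $[g]$ by $[t]\mapsto[t.g]$; on morphisms $[\![F]\!]_{(c,d)}[t]=[F_c(t)]$. A profunctor is finitely curried presentable if it is isomorphic to $[\![P]\!]$ for a finite curried $P$. Composite: for $P:C\nrightarrow D$, $Q:D\nrightarrow E$ and sort $c$, $(P\circledast Q)(c)$ is the $E$-instance presentation with generators $p\otimes q:e$ ($p:d$ generator of $P(c)$, $q:e$ generator of $Q(d)$); $\otimes$ extends to terms by $p\otimes(q.h):=(p\otimes q).h$ and $(p.g)\otimes t:=p\otimes Q(g)(t)$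 ($p:d'$, $g:d'\to d$); equations: $s\otimes q=s'\otimes q$ for each equation $s=s':d$ of $P(c)$ and generator $q:e$ of $Q(d)$, and $p\otimes t=p\otimes t'$ for each generator $p:d$ of $P(c)$ and equation $t=t'$ of $Q(d)$. $(P\circledast Q)(f)(p\otimes q):=P(f)(p)\otimes q$. On morphisms, $(\phi\circledast\psi)_c(p\otimes q):=\phi_c(p)\otimes\psi_d(q)$. *)

From Stdlib Require Import List ClassicalEpsilon Relation_Operators.

(* Generic typed paths  f_1 . ... . f_n  (diagrammatic order) or 1_c. *)
Inductive gpath {S F : Type} (dom cod : F -> S) : S -> S -> Type :=
| gnil : forall c : S, gpath dom cod c c
| gcons : forall (f : F) (c' : S), gpath dom cod (cod f) c' -> gpath dom cod (dom f) c'.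
Arguments gnil {S F dom cod} c.
Arguments gcons {S F dom cod} f {c'} _.

Record CatPres := {
  sort : Type;
  fsym : Type;
  fdom : fsym -> sort;
  fcod : fsym -> sort;
  ceq : Type;
  ceq_src : ceq -> sort;
  ceq_tgt : ceq -> sort;
  ceq_lhs : forall e, gpath fdom fcod (ceq_src e) (ceq_tgt e);
  ceq_rhs : forall e, gpath fdom fcod (ceq_src e) (ceq_tgt e) }.

Definition Path (C : CatPres) : sort C -> sort C -> Type := gpath (fdom C) (fcod C).

Fixpoint pcat {C : CatPres} {a b c : sort C} (p : Path C a b) : Path C b c -> Path C a c :=
  match p in gpath _ _ a b return Path C b c -> Path C a c with
  | gnil _ => fun q => q
  | gcons f p' => fun q => gcons f (pcat p' q)
  end.

Definition psym (C : CatPres) (f : fsym C) : Path C (fdom C f) (fcod C f) :=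
  gcons f (gnil (fcod C f)).

Inductive peq (C : CatPres) : forall c c' : sort C, Path C c c' -> Path C c c' -> Prop :=
| peq_ax : forall e, peq C _ _ (ceq_lhs C e) (ceq_rhs C e)
| peq_refl : forall c c' (p : Path C c c'), peq C c c' p p
| peq_sym : forall c c' (p q : Path C c c'), peq C c c' p q -> peq C c c' q p
| peq_trans : forall c c' (p q r : Path C c c'),
    peq C c c' p q -> peq C c c' q r -> peq C c c' p r
| peq_pre : forall f c' (p q : Path C (fcod C f) c'),
    peq C _ c' p q -> peq C _ c' (gcons f p) (gcons f q)
| peq_post : forall c f (p q : Path C c (fdom C f)),
    peq C c _ p q -> peq C c _ (pcat p (psym C f)) (pcat q (psym C f)).

Definition quot {T : Type} (R : T -> T -> Prop) : Type :=
  { A : T -> Prop | exists x, A = R x }.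
Definition cls {T : Type} (R : T -> T -> Prop) (x : T) : quot R :=
  exist _ (R x) (ex_intro _ x eq_refl).
Definition rep {T : Type} {R : T -> T -> Prop} (q : quot R) : T :=
  proj1_sig (constructive_indefinite_description _ (proj2_sig q)).

(* Morphisms of [[C]] : ≈_C-classes of paths; identities and composition *)
Definition Hom (C : CatPres) (c c' : sort C) : Type := quot (peq C c c').
Definition hid (C : CatPres) (c : sort C) : Hom C c c := cls _ (gnil c).
Definition hcomp {C : CatPres} {a b c : sort C} (f : Hom C a b) (g : Hom C b c) : Hom C a c :=
  cls _ (pcat (rep f) (rep g)).

Record InstPres (D : CatPres) := {
  gen : Type;
  gsort : gen -> sort D;
  ieq : Type;
  ieq_sort : ieq -> sort D;
  ieq_lhs : forall e, { x : gen & Path D (gsort x) (ieq_sort e) };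
  ieq_rhs : forall e, { x : gen & Path D (gsort x) (ieq_sort e) } }.
Arguments gen {D}.
Arguments gsort {D}.
Arguments ieq {D}.
Arguments ieq_sort {D}.
Arguments ieq_lhs {D}.
Arguments ieq_rhs {D}.

Definition term {D : CatPres} (I : InstPres D) (d : sort D) : Type :=
  { x : gen I & Path D (gsort I x) d }.
Definition tcat {D : CatPres} {I : InstPres D} {d d' : sort D}
  (t : term I d) (g : Path D d d') : term I d' :=
  existT _ (projT1 t) (pcat (projT2 t) g).
Definition gterm {D : CatPres} (I : InstPres D) (x : gen I) : term I (gsort I x) :=
  existT _ x (gnil _).

Inductive teq {D : CatPres} (I : InstPres D) : forall d : sort D, term I d -> term I d -> Prop :=
| teq_ax : forall e, teq I _ (ieq_lhs I e) (ieq_rhs I e)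
| teq_refl : forall d (t : term I d), teq I d t t
| teq_sym : forall d (s t : term I d), teq I d s t -> teq I d t s
| teq_trans : forall d (s t u : term I d), teq I d s t -> teq I d t u -> teq I d s u
| teq_rcat : forall f (s t : term I (fdom D f)),
    teq I _ s t -> teq I _ (tcat s (psym D f)) (tcat t (psym D f))
| teq_deq : forall e (t : term I (ceq_src D e)),
    teq I _ (tcat t (ceq_lhs D e)) (tcat t (ceq_rhs D e)).

Definition RawMor {D : CatPres} (I J : InstPres D) : Type :=
  forall x : gen I, term J (gsort I x).
Definition tapp {D : CatPres} {I J : InstPres D} (F : RawMor I J) {d : sort D}
  (t : term I d) : term J d := tcat (F (projT1 t)) (projT2 t).
Definition is_mor {D : CatPres} {I J : InstPres D} (F : RawMor I J) : Prop :=
  forall e : ieq I, teq J _ (tapp F (ieq_lhs I e)) (tapp F (ieq_rhs I e)).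
Definition mor_equiv {D : CatPres} {I J : InstPres D} (F G : RawMor I J) : Prop :=
  forall x, teq J _ (F x) (G x).
Definition mid {D : CatPres} (I : InstPres D) : RawMor I I := fun x => gterm I x.
Definition mcomp {D : CatPres} {I J K : InstPres D} (G : RawMor J K) (F : RawMor I J) :
  RawMor I K := fun x => tapp G (F x).

Record Curr (C D : CatPres) := {
  Pob : sort C -> InstPres D;
  Pmor : forall f : fsym C, RawMor (Pob (fcod C f)) (Pob (fdom C f)) }.
Arguments Pob {C D}.
Arguments Pmor {C D}.

(* P(f_1. ... .f_n) : P(c') -> P(c), applying P(f_n) first and P(f_1) last *)
Fixpoint Ppath {C D : CatPres} (P : Curr C D) {c c' : sort C} (p : Path C c c') :
  RawMor (Pob P c') (Pob P c) :=
  match p in gpath _ _ c c' return RawMor (Pob P c') (Pob P c) with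
  | gnil c => mid (Pob P c)
  | gcons f p' => mcomp (Pmor P f) (Ppath P p')
  end.

Definition is_curr {C D : CatPres} (P : Curr C D) : Prop :=
  (forall f, is_mor (Pmor P f)) /\
  (forall e : ceq C, mor_equiv (Ppath P (ceq_lhs C e)) (Ppath P (ceq_rhs C e))).

Definition CurrMor {C D : CatPres} (P P' : Curr C D) : Type :=
  forall c, RawMor (Pob P c) (Pob P' c).
Definition is_curr_mor {C D : CatPres} {P P' : Curr C D} (F : CurrMor P P') : Prop :=
  (forall c, is_mor (F c)) /\
  (forall f : fsym C,
     mor_equiv (mcomp (F (fdom C f)) (Pmor P f)) (mcomp (Pmor P' f) (F (fcod C f)))).

Definition finite_type (T : Type) : Prop := exists l : list T, forall x, In x l.
Definition finite_cat (C : CatPres) : Prop :=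
  finite_type (sort C) /\ finite_type (fsym C) /\ finite_type (ceq C).
Definition finite_inst {D : CatPres} (I : InstPres D) : Prop :=
  finite_type (gen I) /\ finite_type (ieq I).
Definition finite_curr {C D : CatPres} (P : Curr C D) : Prop :=
  finite_cat C /\ finite_cat D /\ forall c, finite_inst (Pob P c).

Section Composite.
Context {D E : CatPres} (I : InstPres D) (Q : Curr D E).

Definition CGen : Type := { p : gen I & gen (Pob Q (gsort I p)) }.
Definition cgsort (x : CGen) : sort E := gsort (Pob Q (gsort I (projT1 x))) (projT2 x).

(* s ⊗ t, with (p.g) ⊗ t := p ⊗ Q(g)(t) and p ⊗ (q.h) := (p ⊗ q).h *)
Definition tens {d : sort D} {e : sort E} (s : term I d) (t : term (Pob Q d) e) :
  { x : CGen & Path E (cgsort x) e } :=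
  let u := tapp (Ppath Q (projT2 s)) t in
  existT (fun x : CGen => Path E (cgsort x) e) (existT _ (projT1 s) (projT1 u)) (projT2 u).

Definition CIeq : Type :=
  ({ e : ieq I & gen (Pob Q (ieq_sort I e)) } + { p : gen I & ieq (Pob Q (gsort I p)) })%type.

Definition cieq_sort (x : CIeq) : sort E :=
  match x with
  | inl (existT _ e q) => gsort (Pob Q (ieq_sort I e)) q
  | inr (existT _ p e') => ieq_sort (Pob Q (gsort I p)) e'
  end.

Definition cieq_lhs (x : CIeq) : { y : CGen & Path E (cgsort y) (cieq_sort x) } :=
  match x as x0 return { y : CGen & Path E (cgsort y) (cieq_sort x0) } with
  | inl (existT _ e q) => tens (ieq_lhs I e) (gterm _ q)
  | inr (existT _ p e') => tens (gterm I p) (ieq_lhs _ e')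
  end.

Definition cieq_rhs (x : CIeq) : { y : CGen & Path E (cgsort y) (cieq_sort x) } :=
  match x as x0 return { y : CGen & Path E (cgsort y) (cieq_sort x0) } with
  | inl (existT _ e q) => tens (ieq_rhs I e) (gterm _ q)
  | inr (existT _ p e') => tens (gterm I p) (ieq_rhs _ e')
  end.

Definition CompInst : InstPres E :=
  {| gen := CGen; gsort := cgsort; ieq := CIeq; ieq_sort := cieq_sort;
     ieq_lhs := cieq_lhs; ieq_rhs := cieq_rhs |}.
End Composite.

Definition CompCurr {C D E : CatPres} (P : Curr C D) (Q : Curr D E) : Curr C E :=
  {| Pob := fun c => CompInst (Pob P c) Q;
     Pmor := fun f (x : CGen (Pob P (fcod C f)) Q) =>
       tens (Pob P (fdom C f)) Q (Pmor P f (projT1 x)) (gterm _ (projT2 x)) |}.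

Definition CompMor {C D E : CatPres} {P P' : Curr C D} {Q Q' : Curr D E}
  (phi : CurrMor P P') (psi : CurrMor Q Q') : CurrMor (CompCurr P Q) (CompCurr P' Q') :=
  fun c (x : CGen (Pob P c) Q) =>
    tens (Pob P' c) Q' (phi c (projT1 x)) (psi (gsort (Pob P c) (projT1 x)) (projT2 x)).

(* Profunctors [[C]]^op x [[D]] -> Set *)
Record Prof (C D : CatPres) := {
  pobj : sort C -> sort D -> Type;
  lact : forall c c' d, Hom C c c' -> pobj c' d -> pobj c d;
  ract : forall c d d', Hom D d d' -> pobj c d -> pobj c d' }.
Arguments pobj {C D}.
Arguments lact {C D} _ {c c' d}.
Arguments ract {C D} _ {c d d'}.

Definition is_prof {C D : CatPres} (P : Prof C D) : Prop :=
  (forall c d (x : pobj P c d), lact P (hid C c) x = x) /\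
  (forall c d (x : pobj P c d), ract P (hid D d) x = x) /\
  (forall a b c d (f : Hom C a b) (g : Hom C b c) (x : pobj P c d),
      lact P (hcomp f g) x = lact P f (lact P g x)) /\
  (forall c a b d (f : Hom D a b) (g : Hom D b d) (x : pobj P c a),
      ract P (hcomp f g) x = ract P g (ract P f x)) /\
  (forall c c' d d' (f : Hom C c c') (g : Hom D d d') (x : pobj P c' d),
      lact P f (ract P g x) = ract P g (lact P f x)).

Definition ProfMor {C D : CatPres} (P Q : Prof C D) : Type :=
  forall c d, pobj P c d -> pobj Q c d.
Definition is_nat {C D : CatPres} {P Q : Prof C D} (eta : ProfMor P Q) : Prop :=
  (forall c c' d (f : Hom C c c') (x : pobj P c' d),
      eta c d (lact P f x) = lact Q f (eta c' d x)) /\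
  (forall c d d' (g : Hom D d d') (x : pobj P c d),
      eta c d' (ract P g x) = ract Q g (eta c d x)).
Definition is_iso {C D : CatPres} {P Q : Prof C D} (eta : ProfMor P Q) : Prop :=
  is_nat eta /\
  exists inv : ProfMor Q P, is_nat inv /\
    (forall c d x, inv c d (eta c d x) = x) /\ (forall c d y, eta c d (inv c d y) = y).

Inductive CompStep {C D E : CatPres} (P : Prof C D) (Q : Prof D E) (c : sort C) (e : sort E) :
  { d : sort D & (pobj P c d * pobj Q d e)%type } ->
  { d : sort D & (pobj P c d * pobj Q d e)%type } -> Prop :=
| cstep : forall d d' (g : Hom D d d') (p : pobj P c d) (q' : pobj Q d' e),
    CompStep P Q c e (existT _ d (p, lact Q g q')) (existT _ d' (ract P g p, q')).

Definition CompRel {C D E : CatPres} (P : Prof C D) (Q : Prof D E) (c : sort C) (e : sort E) :=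
  clos_refl_sym_trans _ (CompStep P Q c e).

Definition ProfComp {C D E : CatPres} (P : Prof C D) (Q : Prof D E) : Prof C E :=
  {| pobj := fun c e => quot (CompRel P Q c e);
     lact := fun c c' e f z =>
       let w := rep z in
       cls (CompRel P Q c e) (existT _ (projT1 w) (lact P f (fst (projT2 w)), snd (projT2 w)));
     ract := fun c e e' h z =>
       let w := rep z in
       cls (CompRel P Q c e') (existT _ (projT1 w) (fst (projT2 w), ract Q h (snd (projT2 w)))) |}.

Definition pcls {C D E : CatPres} (P : Prof C D) (Q : Prof D E) {c : sort C} {d : sort D}
  {e : sort E} (p : pobj P c d) (q : pobj Q d e) : pobj (ProfComp P Q) c e :=
  cls (CompRel P Q c e) (existT _ d (p, q)).

Definition hcompMor {C D E : CatPres} {P P' : Prof C D} {Q Q' : Prof D E}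
  (al : ProfMor P P') (be : ProfMor Q Q') : ProfMor (ProfComp P Q) (ProfComp P' Q') :=
  fun c e z =>
    let w := rep z in
    cls (CompRel P' Q' c e)
        (existT _ (projT1 w) (al c _ (fst (projT2 w)), be _ e (snd (projT2 w)))).

Definition SemProf {C D : CatPres} (P : Curr C D) : Prof C D :=
  {| pobj := fun c d => quot (teq (Pob P c) d);
     lact := fun c c' d f z => cls (teq (Pob P c) d) (tapp (Ppath P (rep f)) (rep z));
     ract := fun c d d' g z => cls (teq (Pob P c) d') (tcat (rep z) (rep g)) |}.

Definition SemMor {C D : CatPres} {P P' : Curr C D} (F : CurrMor P P') :
  ProfMor (SemProf P) (SemProf P') :=
  fun c d z => cls (teq (Pob P' c) d) (tapp (F c) (rep z)).

Definition mu {C D E : CatPres} (P : Curr C D) (Q : Curr D E) :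
  ProfMor (ProfComp (SemProf P) (SemProf Q)) (SemProf (CompCurr P Q)) :=
  fun c e z =>
    let w := rep z in
    cls (teq (Pob (CompCurr P Q) c) e)
        (tens (Pob P c) Q (rep (fst (projT2 w))) (rep (snd (projT2 w)))).

Definition fin_curr_presentable {C D : CatPres} (PP : Prof C D) : Prop :=
  exists R : Curr C D, is_curr R /\ finite_curr R /\
    exists eta : ProfMor (SemProf R) PP, is_iso eta.

From Stdlib Require Import List ClassicalEpsilon Relation_Definitions Relation_Operators
  Operators_Properties FunctionalExtensionality PropExtensionality ProofIrrelevance.

(* [μ] is well defined because [⊗] respects both presentations and turns the
   coend relation [<s.g, t> ~ <s, g.t>] into its defining clause
   [(s.g) ⊗ t = s ⊗ Q(g)(t)].  Every term of [(P ⊛ Q)(c)] is [(p ⊗ q).k] with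
   [p], [q] generators, and reading it back as [<[p], [q.k]>] inverts [μ]; this
   respects [≈] because the equations of [P ⊛ Q] are images under [⊗] of
   equations of [P(c)] and of the [Q(d)].  Naturality in [P] and [Q] is
   [(φ ⊛ ψ)(s ⊗ t) ≈ φ(s) ⊗ ψ(t)].  Generators and equations of [P ⊛ Q] are
   finite sums of finite products, and horizontal composition preserves
   isomorphisms, so [𝒫 ⊙ 𝒬] is presented by the composite of presentations of
   [𝒫] and [𝒬]. *)

Section Quotients.
Context {T : Type} {R : T -> T -> Prop}.

Lemma quot_eq (q q' : quot R) : proj1_sig q = proj1_sig q' -> q = q'.
Proof. destruct q, q'; simpl; intros ->; f_equal; apply proof_irrelevance. Qed.

Lemma cls_rep (q : quot R) : cls R (rep q) = q.
Proof.
  apply quot_eq; unfold rep.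
  destruct (constructive_indefinite_description _ (proj2_sig q)) as [x Hx]; simpl.
  now rewrite Hx.
Qed.

Lemma quot_ex (q : quot R) : exists x, q = cls R x.
Proof. exists (rep q); symmetry; apply cls_rep. Qed.

Hypothesis HR : equivalence T R.

Lemma cls_eq x y : R x y -> cls R x = cls R y.
Proof.
  intro Hxy; apply quot_eq; simpl; extensionality z; apply propositional_extensionality.
  destruct HR as [_ Htr Hsym]; split; eauto.
Qed.

Lemma cls_inj x y : cls R x = cls R y -> R x y.
Proof.
  intro Hxy; apply (f_equal (@proj1_sig _ _)) in Hxy; simpl in Hxy.
  rewrite Hxy; apply (equiv_refl _ _ HR).
Qed.

Lemma rep_cls x : R (rep (cls R x)) x.
Proof. apply cls_inj, cls_rep. Qed.

Lemma rep_cls_resp {X : Type} (F : T -> X) :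
  (forall x y, R x y -> F x = F y) -> forall x, F (rep (cls R x)) = F x.
Proof. intros HF x; apply HF, rep_cls. Qed.
End Quotients.

Lemma pcat_nil_r {C : CatPres} {a b} (p : Path C a b) : pcat p (gnil b) = p.
Proof. induction p as [|f c' p IH]; simpl; [reflexivity | now rewrite IH]. Qed.

Lemma pcat_assoc {C : CatPres} {a b c d} (p : Path C a b) (q : Path C b c) (r : Path C c d) :
  pcat (pcat p q) r = pcat p (pcat q r).
Proof. induction p as [|f c' p IH]; simpl; [reflexivity | now rewrite IH]. Qed.

Lemma peq_equivalence (C : CatPres) c c' : equivalence _ (peq C c c').
Proof. split; red; eauto using peq. Qed.

Lemma teq_equivalence {D : CatPres} (I : InstPres D) d : equivalence _ (teq I d).
Proof. split; red; eauto using teq. Qed.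

Section Terms.
Context {D : CatPres}.

Lemma tcat_nil {I : InstPres D} {d} (t : term I d) : tcat t (gnil d) = t.
Proof. destruct t as [x g]; unfold tcat; simpl; now rewrite pcat_nil_r. Qed.

Lemma tcat_tcat {I : InstPres D} {a b c} (t : term I a) (p : Path D a b) (q : Path D b c) :
  tcat (tcat t p) q = tcat t (pcat p q).
Proof. destruct t as [x g]; unfold tcat; simpl; now rewrite pcat_assoc. Qed.

Lemma tapp_tcat {I J : InstPres D} (F : RawMor I J) {a b} (t : term I a) (p : Path D a b) :
  tapp F (tcat t p) = tcat (tapp F t) p.
Proof. destruct t as [x g]; symmetry; apply tcat_tcat. Qed.

Lemma tapp_mid {I : InstPres D} {d} (t : term I d) : tapp (mid I) t = t.
Proof. now destruct t. Qed.

Lemma tapp_mcomp {I J K : InstPres D} (G : RawMor J K) (F : RawMor I J) {d} (t : term I d) :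
  tapp (mcomp G F) t = tapp G (tapp F t).
Proof. destruct t as [x g]; symmetry; apply tapp_tcat. Qed.

Lemma tapp_gterm {I J : InstPres D} (F : RawMor I J) x : tapp F (gterm I x) = F x.
Proof. apply tcat_nil. Qed.

Lemma teq_tcat {I : InstPres D} {a b} (p : Path D a b) (s t : term I a) :
  teq I a s t -> teq I b (tcat s p) (tcat t p).
Proof.
  revert s t; induction p as [|f c' p IH]; intros s t Hst.
  - now rewrite !tcat_nil.
  - change (gcons f p) with (pcat (psym D f) p); rewrite <- !tcat_tcat.
    apply IH, teq_rcat, Hst.
Qed.

Lemma teq_peq {I : InstPres D} c c' (p q : Path D c c') :
  peq D c c' p q -> forall s : term I c, teq I c' (tcat s p) (tcat s q).
Proof.
  induction 1 as [| | | |f c' p q _ IH|c f p q _ IH]; intro s; eauto using teq.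
  - change (gcons f p) with (pcat (psym D f) p); change (gcons f q) with (pcat (psym D f) q).
    rewrite <- !tcat_tcat; apply IH.
  - rewrite <- !tcat_tcat; apply teq_rcat, IH.
Qed.

Lemma tapp_teq {I J : InstPres D} (F : RawMor I J) :
  is_mor F -> forall d (s t : term I d), teq I d s t -> teq J d (tapp F s) (tapp F t).
Proof. intros HF d s t; induction 1; rewrite ?tapp_tcat; eauto using teq. Qed.

Lemma tapp_mor_equiv {I J : InstPres D} (F G : RawMor I J) :
  mor_equiv F G -> forall d (t : term I d), teq J d (tapp F t) (tapp G t).
Proof. intros HFG d [x g]; apply teq_tcat, HFG. Qed.
End Terms.

Section Curried.
Context {C D : CatPres} (P : Curr C D).

Lemma Ppath_pcat {a b c} (p : Path C a b) (q : Path C b c) {d} (t : term (Pob P c) d) :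
  tapp (Ppath P (pcat p q)) t = tapp (Ppath P p) (tapp (Ppath P q) t).
Proof.
  induction p as [|f c' p IH]; simpl.
  - now rewrite tapp_mid.
  - now rewrite !tapp_mcomp, IH.
Qed.

Hypothesis HP : is_curr P.

Lemma Ppath_teq {c c'} (p : Path C c c') d (s t : term (Pob P c') d) :
  teq _ d s t -> teq _ d (tapp (Ppath P p) s) (tapp (Ppath P p) t).
Proof.
  revert d s t; induction p as [|f c' p IH]; intros d s t Hst; simpl.
  - now rewrite !tapp_mid.
  - rewrite !tapp_mcomp; apply tapp_teq; [apply HP | auto].
Qed.

Lemma Ppath_peq c c' (p q : Path C c c') : peq C c c' p q ->
  forall d (t : term (Pob P c') d), teq _ d (tapp (Ppath P p) t) (tapp (Ppath P q) t).
Proof.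
  induction 1; intros d t; eauto using teq.
  - apply tapp_mor_equiv, HP.
  - simpl; rewrite !tapp_mcomp; apply tapp_teq; [apply HP | auto].
  - rewrite !Ppath_pcat; auto.
Qed.
End Curried.

Lemma curr_mor_Ppath {C D : CatPres} {P P' : Curr C D} (F : CurrMor P P') :
  is_curr P' -> is_curr_mor F -> forall c c' (p : Path C c c') d (t : term (Pob P c') d),
  teq _ d (tapp (F c) (tapp (Ppath P p) t)) (tapp (Ppath P' p) (tapp (F c') t)).
Proof.
  intros HP' HF c c' p; induction p as [|f c' p IH]; intros d t; simpl.
  - rewrite !tapp_mid; apply teq_refl.
  - rewrite !tapp_mcomp, <- (tapp_mcomp (F (fdom C f)) (Pmor P f)).
    eapply teq_trans; [apply tapp_mor_equiv, HF |].
    rewrite tapp_mcomp; apply tapp_teq; [apply HP' | apply IH].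
Qed.

Section Tensor.
Context {D E : CatPres} (I : InstPres D) (Q : Curr D E).

Definition gtens (p : gen I) {e} (u : term (Pob Q (gsort I p)) e) : term (CompInst I Q) e :=
  existT (fun x : CGen I Q => Path E (cgsort I Q x) e) (existT _ p (projT1 u)) (projT2 u).

Lemma tens_gtens {d e} (s : term I d) (t : term (Pob Q d) e) :
  tens I Q s t = gtens (projT1 s) (tapp (Ppath Q (projT2 s)) t).
Proof. reflexivity. Qed.

Lemma tens_gterm p {e} (t : term (Pob Q (gsort I p)) e) : tens I Q (gterm I p) t = gtens p t.
Proof. now destruct t. Qed.

Lemma gtens_proj {e} (w : term (CompInst I Q) e) :
  gtens (projT1 (projT1 w)) (existT _ (projT2 (projT1 w)) (projT2 w)) = w.
Proof. now destruct w as [[p q] k]. Qed.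

Lemma tens_tcat_r {d e e'} (s : term I d) (t : term (Pob Q d) e) (k : Path E e e') :
  tens I Q s (tcat t k) = @tcat E (CompInst I Q) _ _ (tens I Q s t) k.
Proof. unfold tens; now rewrite tapp_tcat. Qed.

Lemma tens_tcat_l {d d' e} (s : term I d) (g : Path D d d') (t : term (Pob Q d') e) :
  tens I Q (tcat s g) t = tens I Q s (tapp (Ppath Q g) t).
Proof. destruct s as [x h]; unfold tens, tcat; cbn [projT1 projT2]; now rewrite Ppath_pcat. Qed.

Lemma gtens_teq p e (u u' : term (Pob Q (gsort I p)) e) :
  teq _ e u u' -> teq (CompInst I Q) e (gtens p u) (gtens p u').
Proof.
  induction 1 as [ax| | | | |]; eauto using teq.
  - exact (teq_ax (CompInst I Q) (inr (existT _ p ax))).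
  - exact (teq_rcat (CompInst I Q) f _ _ IHteq).
  - exact (teq_deq (CompInst I Q) e (gtens p t)).
Qed.

Hypothesis HQ : is_curr Q.

Lemma tens_teq_r {d e} (s : term I d) (t t' : term (Pob Q d) e) :
  teq _ e t t' -> teq (CompInst I Q) e (tens I Q s t) (tens I Q s t').
Proof. intro Htt'; rewrite !tens_gtens; apply gtens_teq, Ppath_teq; auto. Qed.

Lemma tens_teq_l {d} (s s' : term I d) : teq I d s s' ->
  forall e (t : term (Pob Q d) e), teq (CompInst I Q) e (tens I Q s t) (tens I Q s' t).
Proof.
  induction 1 as [ax| | | | |]; intros e' v; eauto using teq; rewrite ?tens_tcat_l; auto.
  - destruct v as [q k].
    change (existT _ q k) with (tcat (gterm (Pob Q (ieq_sort I ax)) q) k).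
    rewrite !tens_tcat_r; apply teq_tcat.
    exact (teq_ax (CompInst I Q) (inl (existT _ ax q))).
  - apply tens_teq_r, Ppath_peq, peq_ax; auto.
Qed.

Lemma tens_teq {d e} (s s' : term I d) (t t' : term (Pob Q d) e) :
  teq I d s s' -> teq _ e t t' -> teq (CompInst I Q) e (tens I Q s t) (tens I Q s' t').
Proof. intros Hs Ht; eapply teq_trans; [apply tens_teq_l | apply tens_teq_r]; eauto. Qed.

End Tensor.

Section Composite.
Context {C D E : CatPres} (P : Curr C D) (Q : Curr D E).

Lemma CompCurr_is_mor c {J : InstPres E} (F : RawMor (Pob (CompCurr P Q) c) J) :
  (forall ax q, teq J _ (tapp F (tens _ Q (ieq_lhs (Pob P c) ax) (gterm _ q)))
                        (tapp F (tens _ Q (ieq_rhs (Pob P c) ax) (gterm _ q)))) ->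
  (forall p ax, teq J _ (tapp F (tens _ Q (gterm (Pob P c) p) (ieq_lhs _ ax)))
                        (tapp F (tens _ Q (gterm (Pob P c) p) (ieq_rhs _ ax)))) ->
  is_mor F.
Proof. intros Hl Hr [[ax q]|[p ax]]; [apply Hl | apply Hr]. Qed.

Lemma CompCurr_Pmor_tens f {d e} (s : term (Pob P (fcod C f)) d) (t : term (Pob Q d) e) :
  tapp (Pmor (CompCurr P Q) f) (tens _ Q s t) = tens _ Q (tapp (Pmor P f) s) t.
Proof.
  destruct s as [x g]; unfold tapp at 2; cbn [projT1 projT2].
  rewrite tens_tcat_l, tens_gtens; cbn [projT1 projT2].
  destruct (tapp (Ppath Q g) t) as [q k].
  symmetry; apply (tens_tcat_r _ Q _ (gterm _ q) k).
Qed.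

Lemma CompCurr_Ppath_tens {c c'} (p : Path C c c') {d e} (s : term (Pob P c') d)
  (t : term (Pob Q d) e) :
  tapp (Ppath (CompCurr P Q) p) (tens _ Q s t) = tens _ Q (tapp (Ppath P p) s) t.
Proof.
  induction p as [|f c' p IH]; cbn [Ppath].
  - now rewrite !tapp_mid.
  - now rewrite !tapp_mcomp, IH, CompCurr_Pmor_tens.
Qed.

Lemma CompCurr_is_curr : is_curr P -> is_curr Q -> is_curr (CompCurr P Q).
Proof.
  intros HP HQ; split.
  - intro f; apply CompCurr_is_mor; intros; rewrite !CompCurr_Pmor_tens.
    + apply tens_teq_l, HP; auto.
    + apply tens_teq_r, teq_ax; auto.
  - intros ax [p q].
    rewrite <- (tapp_gterm (Ppath (CompCurr P Q) (ceq_lhs C ax))),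
      <- (tapp_gterm (Ppath (CompCurr P Q) (ceq_rhs C ax))).
    change (gterm (Pob (CompCurr P Q) (ceq_tgt C ax)) (existT _ p q))
      with (tens _ Q (gterm (Pob P (ceq_tgt C ax)) p) (gterm _ q)).
    rewrite !CompCurr_Ppath_tens; apply tens_teq_l, Ppath_peq, peq_ax; auto.
Qed.
End Composite.

Section ProfComposite.
Context {C D E : CatPres} (PP : Prof C D) (QQ : Prof D E).

Lemma CompRel_equivalence c e : equivalence _ (CompRel PP QQ c e).
Proof. apply clos_rst_is_equiv. Qed.

Lemma CompRel_rep_cls c e {X : Type} (F : _ -> X) :
  (forall w w', CompStep PP QQ c e w w' -> F w = F w') ->
  forall w, F (rep (cls (CompRel PP QQ c e) w)) = F w.
Proof.
  intro HF; apply rep_cls_resp; [apply CompRel_equivalence |].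
  induction 1; [auto | reflexivity | congruence ..].
Qed.

Lemma pcls_lact_ract {c d d' e} (g : Hom D d d') (p : pobj PP c d) (q : pobj QQ d' e) :
  pcls PP QQ p (lact QQ g q) = pcls PP QQ (ract PP g p) q.
Proof. apply cls_eq; [apply CompRel_equivalence | apply rst_step, cstep]. Qed.

Lemma ProfComp_pcls_ex {c e} (z : pobj (ProfComp PP QQ) c e) :
  exists d (p : pobj PP c d) (q : pobj QQ d e), z = pcls PP QQ p q.
Proof. destruct (quot_ex z) as [[d [p q]] ->]; now exists d, p, q. Qed.

Lemma ProfComp_lact_pcls : is_prof PP -> forall c c' d e (f : Hom C c c')
  (p : pobj PP c' d) (q : pobj QQ d e),
  lact (ProfComp PP QQ) f (pcls PP QQ p q) = pcls PP QQ (lact PP f p) q.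
Proof.
  intros (_ & _ & _ & _ & Hcomm) c c' d e f p q; simpl.
  apply (CompRel_rep_cls _ _ (fun w => pcls PP QQ (lact PP f (fst (projT2 w))) (snd (projT2 w)))).
  destruct 1; simpl; rewrite Hcomm; apply pcls_lact_ract.
Qed.

Lemma ProfComp_ract_pcls : is_prof QQ -> forall c d e e' (h : Hom E e e')
  (p : pobj PP c d) (q : pobj QQ d e),
  ract (ProfComp PP QQ) h (pcls PP QQ p q) = pcls PP QQ p (ract QQ h q).
Proof.
  intros (_ & _ & _ & _ & Hcomm) c d e e' h p q; simpl.
  apply (CompRel_rep_cls _ _ (fun w => pcls PP QQ (fst (projT2 w)) (ract QQ h (snd (projT2 w))))).
  destruct 1; simpl; rewrite <- Hcomm; apply pcls_lact_ract.
Qed.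
End ProfComposite.

Lemma hcompMor_pcls {C D E : CatPres} {PP PP' : Prof C D} {QQ QQ' : Prof D E}
  (al : ProfMor PP PP') (be : ProfMor QQ QQ') : is_nat al -> is_nat be ->
  forall c d e (p : pobj PP c d) (q : pobj QQ d e),
  hcompMor al be c e (pcls PP QQ p q) = pcls PP' QQ' (al c d p) (be d e q).
Proof.
  intros [_ Hal] [Hbe _] c d e p q; unfold hcompMor.
  apply (CompRel_rep_cls _ _ _ _
    (fun w => pcls PP' QQ' (al c _ (fst (projT2 w))) (be _ e (snd (projT2 w))))).
  destruct 1; simpl; rewrite Hbe, Hal; apply pcls_lact_ract.
Qed.

Lemma hcompMor_is_nat {C D E : CatPres} {PP PP' : Prof C D} {QQ QQ' : Prof D E}
  (al : ProfMor PP PP') (be : ProfMor QQ QQ') :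
  is_prof PP -> is_prof QQ -> is_prof PP' -> is_prof QQ' ->
  is_nat al -> is_nat be -> is_nat (hcompMor al be).
Proof.
  intros HPP HQQ HPP' HQQ' Hal Hbe; split.
  - intros c c' e f z; destruct (ProfComp_pcls_ex _ _ z) as (d & p & q & ->).
    rewrite ProfComp_lact_pcls, !hcompMor_pcls, ProfComp_lact_pcls, (proj1 Hal); auto.
  - intros c e e' h z; destruct (ProfComp_pcls_ex _ _ z) as (d & p & q & ->).
    rewrite ProfComp_ract_pcls, !hcompMor_pcls, ProfComp_ract_pcls, (proj2 Hbe); auto.
Qed.

Section Isomorphisms.
Context {C D : CatPres}.

Lemma is_nat_inverse {P Q : Prof C D} (f : ProfMor P Q) (g : ProfMor Q P) :
  is_nat f -> (forall c d x, g c d (f c d x) = x) -> (forall c d y, f c d (g c d y) = y) ->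
  is_nat g.
Proof.
  intros [Hl Hr] gf fg; split.
  - intros c c' d h y; rewrite <- (fg c' d y) at 1; now rewrite <- Hl, gf.
  - intros c d d' h y; rewrite <- (fg c d y) at 1; now rewrite <- Hr, gf.
Qed.

Lemma is_iso_inverse {P Q : Prof C D} (f : ProfMor P Q) (g : ProfMor Q P) :
  is_nat f -> (forall c d x, g c d (f c d x) = x) -> (forall c d y, f c d (g c d y) = y) ->
  is_iso f.
Proof. intros Hf gf fg; split; [| exists g; eauto using is_nat_inverse]. exact Hf. Qed.

Definition prof_iso (P Q : Prof C D) : Prop := exists eta : ProfMor P Q, is_iso eta.

Lemma prof_iso_sym (P Q : Prof C D) : prof_iso P Q -> prof_iso Q P.
Proof.
  intros [f [Hf [g [Hg [gf fg]]]]]; exists g; apply (is_iso_inverse g f); auto.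
Qed.

Lemma prof_iso_trans (P Q R : Prof C D) : prof_iso P Q -> prof_iso Q R -> prof_iso P R.
Proof.
  intros [f [[Hf1 Hf2] [f' [_ [f'f ff']]]]] [g [[Hg1 Hg2] [g' [_ [g'g gg']]]]].
  exists (fun c d x => g c d (f c d x)).
  apply (is_iso_inverse _ (fun c d z => f' c d (g' c d z))).
  - split; intros; rewrite ?Hf1, ?Hf2, ?Hg1, ?Hg2; reflexivity.
  - intros; now rewrite g'g, f'f.
  - intros; now rewrite ff', gg'.
Qed.
End Isomorphisms.

Lemma prof_iso_ProfComp {C D E : CatPres} (PP PP' : Prof C D) (QQ QQ' : Prof D E) :
  is_prof PP -> is_prof QQ -> is_prof PP' -> is_prof QQ' ->
  prof_iso PP PP' -> prof_iso QQ QQ' -> prof_iso (ProfComp PP QQ) (ProfComp PP' QQ').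
Proof.
  intros HPP HQQ HPP' HQQ' [al [Hal [al' [Hal' [ala ala']]]]] [be [Hbe [be' [Hbe' [beb beb']]]]].
  exists (hcompMor al be); apply (is_iso_inverse _ (hcompMor al' be')).
  - apply hcompMor_is_nat; auto.
  - intros c e z; destruct (ProfComp_pcls_ex _ _ z) as (d & p & q & ->).
    now rewrite !hcompMor_pcls, ala, beb.
  - intros c e z; destruct (ProfComp_pcls_ex _ _ z) as (d & p & q & ->).
    now rewrite !hcompMor_pcls, ala', beb'.
Qed.

Section Semantics.
Context {C D : CatPres} (P : Curr C D) (HP : is_curr P).

Lemma SemProf_lact_rep {c c' d} (f : Hom C c c') (t : term (Pob P c') d) :
  lact (SemProf P) f (cls _ t) = cls (teq _ d) (tapp (Ppath P (rep f)) t).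
Proof. apply cls_eq, Ppath_teq, rep_cls; auto using teq_equivalence. Qed.

Lemma SemProf_ract_rep {c d d'} (g : Hom D d d') (t : term (Pob P c) d) :
  ract (SemProf P) g (cls _ t) = cls (teq _ d') (tcat t (rep g)).
Proof. apply cls_eq, teq_tcat, rep_cls; auto using teq_equivalence. Qed.

Lemma SemProf_lact_cls {c c' d} (p : Path C c c') (t : term (Pob P c') d) :
  lact (SemProf P) (cls _ p) (cls _ t) = cls (teq _ d) (tapp (Ppath P p) t).
Proof.
  rewrite SemProf_lact_rep; apply cls_eq, Ppath_peq, rep_cls;
    auto using teq_equivalence, peq_equivalence.
Qed.

Lemma SemProf_ract_cls {c d d'} (g : Path D d d') (t : term (Pob P c) d) :
  ract (SemProf P) (cls _ g) (cls _ t) = cls (teq _ d') (tcat t g).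
Proof.
  rewrite SemProf_ract_rep; apply cls_eq, teq_peq, rep_cls;
    auto using teq_equivalence, peq_equivalence.
Qed.

Lemma SemProf_is_prof : is_prof (SemProf P).
Proof.
  repeat split.
  (* [hid] is a [cls] at type [gpath _ _ c c] rather than [Path C c c], so it is not
     found by [rewrite]. *)
  - intros c d x; destruct (quot_ex x) as [t ->].
    etransitivity; [apply SemProf_lact_cls |]; simpl; now rewrite tapp_mid.
  - intros c d x; destruct (quot_ex x) as [t ->].
    etransitivity; [apply SemProf_ract_cls |]; now rewrite tcat_nil.
  - intros a b c d f g x; destruct (quot_ex x) as [t ->].
    rewrite !SemProf_lact_rep, <- Ppath_pcat.
    apply cls_eq, Ppath_peq, rep_cls; auto using teq_equivalence, peq_equivalence.
  - intros c a b d f g x; destruct (quot_ex x) as [t ->].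
    rewrite !SemProf_ract_rep, tcat_tcat.
    apply cls_eq, teq_peq, rep_cls; auto using teq_equivalence, peq_equivalence.
  - intros c c' d d' f g x; destruct (quot_ex x) as [t ->].
    now rewrite SemProf_ract_rep, !SemProf_lact_rep, SemProf_ract_rep, tapp_tcat.
Qed.
End Semantics.

Section SemanticsMor.
Context {C D : CatPres} {P P' : Curr C D} (F : CurrMor P P').

Lemma SemMor_cls : (forall c, is_mor (F c)) -> forall c d (t : term (Pob P c) d),
  SemMor F c d (cls _ t) = cls _ (tapp (F c) t).
Proof.
  intros HF c d t; apply cls_eq; [apply teq_equivalence |].
  apply tapp_teq, rep_cls, teq_equivalence; auto.
Qed.

Lemma SemMor_is_nat : is_curr P -> is_curr P' -> is_curr_mor F -> is_nat (SemMor F).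
Proof.
  intros HP HP' HF; split.
  - intros c c' d f x; destruct (quot_ex x) as [t ->].
    rewrite SemProf_lact_rep, !SemMor_cls, SemProf_lact_rep by first [apply HF | assumption].
    apply cls_eq; [apply teq_equivalence | apply curr_mor_Ppath; auto].
  - intros c d d' g x; destruct (quot_ex x) as [t ->].
    now rewrite SemProf_ract_rep, !SemMor_cls, SemProf_ract_rep, tapp_tcat
      by first [apply HF | assumption].
Qed.
End SemanticsMor.

Section Mu.
Context {C D E : CatPres} (P : Curr C D) (Q : Curr D E) (HP : is_curr P) (HQ : is_curr Q).

Lemma cls_tens_rep {c d e} (s : term (Pob P c) d) (t : term (Pob Q d) e) :
  cls (teq (Pob (CompCurr P Q) c) e) (tens _ Q (rep (cls (teq _ d) s)) (rep (cls (teq _ e) t)))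
  = cls _ (tens _ Q s t).
Proof.
  apply cls_eq, tens_teq; [apply teq_equivalence | auto | apply rep_cls, teq_equivalence ..].
Qed.

Lemma mu_pcls_rep c d e (x : pobj (SemProf P) c d) (y : pobj (SemProf Q) d e) :
  mu P Q c e (pcls _ _ x y) = cls (teq (Pob (CompCurr P Q) c) e) (tens _ Q (rep x) (rep y)).
Proof.
  apply (CompRel_rep_cls (SemProf P) (SemProf Q) c e
    (fun w => cls (teq (Pob (CompCurr P Q) c) e)
                (tens _ Q (rep (fst (projT2 w))) (rep (snd (projT2 w)))))).
  destruct 1 as [d1 d2 g p q]; cbn [projT2 fst snd].
  destruct (quot_ex p) as [s ->], (quot_ex q) as [t ->].
  rewrite SemProf_lact_rep, SemProf_ract_rep by auto; cbn [projT1].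
  now rewrite !cls_tens_rep, tens_tcat_l.
Qed.

Lemma mu_pcls c d e (s : term (Pob P c) d) (t : term (Pob Q d) e) :
  mu P Q c e (pcls (SemProf P) (SemProf Q) (cls (teq (Pob P c) d) s) (cls (teq (Pob Q d) e) t))
  = cls (teq (Pob (CompCurr P Q) c) e) (tens (Pob P c) Q s t).
Proof. now rewrite mu_pcls_rep, cls_tens_rep. Qed.

Lemma mu_is_nat : is_nat (mu P Q).
Proof.
  pose proof (CompCurr_is_curr P Q HP HQ) as HPQ.
  split.
  - intros c c' e f z; destruct (ProfComp_pcls_ex _ _ z) as (d & x & y & ->).
    destruct (quot_ex x) as [s ->], (quot_ex y) as [t ->].
    rewrite ProfComp_lact_pcls, SemProf_lact_rep, !mu_pcls, SemProf_lact_rep,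
      CompCurr_Ppath_tens; auto using SemProf_is_prof.
  - intros c e e' h z; destruct (ProfComp_pcls_ex _ _ z) as (d & x & y & ->).
    destruct (quot_ex x) as [s ->], (quot_ex y) as [t ->].
    rewrite ProfComp_ract_pcls, SemProf_ract_rep, !mu_pcls, SemProf_ract_rep,
      tens_tcat_r; auto using SemProf_is_prof.
Qed.

Definition mu_inv_term c e (w : term (Pob (CompCurr P Q) c) e) :
  pobj (ProfComp (SemProf P) (SemProf Q)) c e :=
  pcls (SemProf P) (SemProf Q) (cls (teq _ _) (gterm (Pob P c) (projT1 (projT1 w))))
    (cls (teq _ e) (existT (fun q => Path E (gsort _ q) e) (projT2 (projT1 w)) (projT2 w))).

Lemma mu_inv_term_gtens c x e (u : term (Pob Q (gsort (Pob P c) x)) e) :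
  mu_inv_term c e (gtens _ Q x u)
  = pcls (SemProf P) (SemProf Q) (cls (teq _ _) (gterm _ x)) (cls (teq _ e) u).
Proof. now destruct u. Qed.

Lemma mu_inv_term_tens c d e (s : term (Pob P c) d) (t : term (Pob Q d) e) :
  mu_inv_term c e (tens _ Q s t)
  = pcls (SemProf P) (SemProf Q) (cls (teq _ d) s) (cls (teq _ e) t).
Proof.
  destruct s as [x g]; rewrite tens_gtens; cbn [projT1 projT2].
  rewrite mu_inv_term_gtens, <- SemProf_lact_cls, pcls_lact_ract, SemProf_ract_cls by auto.
  reflexivity.
Qed.

Lemma mu_inv_term_tcat c e e' (w : term (Pob (CompCurr P Q) c) e) (k : Path E e e') :
  mu_inv_term c e' (tcat w k)
  = ract (ProfComp (SemProf P) (SemProf Q)) (cls _ k) (mu_inv_term c e w).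
Proof.
  destruct w as [[x q] k0]; unfold mu_inv_term; cbn [projT1 projT2].
  now rewrite ProfComp_ract_pcls, SemProf_ract_cls by auto using SemProf_is_prof.
Qed.

Lemma mu_inv_term_teq c e (w w' : term (Pob (CompCurr P Q) c) e) :
  teq _ e w w' -> mu_inv_term c e w = mu_inv_term c e w'.
Proof.
  induction 1 as [[[ax q]|[x ax]]| | | |f w w' _ IH|ax w]; try congruence.
  (* The axioms of [P ⊛ Q] are [⊗]-images only up to conversion. *)
  1, 2: etransitivity;
    [apply mu_inv_term_tens | etransitivity; [| symmetry; apply mu_inv_term_tens]];
    f_equal; apply cls_eq; [apply teq_equivalence | apply teq_ax].
  - now rewrite !mu_inv_term_tcat, IH.
  - rewrite !mu_inv_term_tcat; f_equal.
    apply cls_eq; [apply peq_equivalence | apply peq_ax].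
Qed.

Definition mu_inv : ProfMor (SemProf (CompCurr P Q)) (ProfComp (SemProf P) (SemProf Q)) :=
  fun c e y => mu_inv_term c e (rep y).

Lemma mu_inv_cls c e (w : term (Pob (CompCurr P Q) c) e) : mu_inv c e (cls _ w) = mu_inv_term c e w.
Proof. apply mu_inv_term_teq, rep_cls, teq_equivalence. Qed.

Lemma mu_is_iso : is_iso (mu P Q).
Proof.
  apply (is_iso_inverse _ mu_inv); [apply mu_is_nat | |].
  - intros c e z; destruct (ProfComp_pcls_ex _ _ z) as (d & x & y & ->).
    destruct (quot_ex x) as [s ->], (quot_ex y) as [t ->].
    now rewrite mu_pcls, mu_inv_cls, mu_inv_term_tens.
  - intros c e y; destruct (quot_ex y) as [w ->].
    now rewrite mu_inv_cls, <- (gtens_proj _ Q w), mu_inv_term_gtens, mu_pcls, tens_gterm.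
Qed.
End Mu.

Section MuNatural.
Context {C D E : CatPres} {P P' : Curr C D} {Q Q' : Curr D E}
  (phi : CurrMor P P') (psi : CurrMor Q Q')
  (HP : is_curr P) (HP' : is_curr P') (HQ : is_curr Q) (HQ' : is_curr Q')
  (Hphi : is_curr_mor phi) (Hpsi : is_curr_mor psi).

Lemma CompMor_gtens c x e (u : term (Pob Q (gsort (Pob P c) x)) e) :
  tapp (CompMor phi psi c) (gtens _ Q x u) = tens _ Q' (phi c x) (tapp (psi _) u).
Proof. destruct u as [q k]; symmetry; apply (tens_tcat_r _ Q' _ (psi _ q) k). Qed.

Lemma CompMor_tens c d e (s : term (Pob P c) d) (t : term (Pob Q d) e) :
  teq _ e (tapp (CompMor phi psi c) (tens _ Q s t)) (tens _ Q' (tapp (phi c) s) (tapp (psi d) t)).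
Proof.
  destruct s as [x g]; rewrite tens_gtens; cbn [projT1 projT2].
  rewrite CompMor_gtens.
  change (tapp (phi c) (existT _ x g)) with (tcat (phi c x) g); rewrite tens_tcat_l.
  apply tens_teq_r, curr_mor_Ppath; auto.
Qed.

Lemma CompMor_is_mor c : is_mor (CompMor phi psi c).
Proof.
  apply CompCurr_is_mor; intros;
    (eapply teq_trans; [apply CompMor_tens | eapply teq_trans; [| apply teq_sym, CompMor_tens]]).
  - apply tens_teq_l, Hphi; auto.
  - apply tens_teq_r, Hpsi; auto.
Qed.

Lemma mu_natural c e (z : pobj (ProfComp (SemProf P) (SemProf Q)) c e) :
  SemMor (CompMor phi psi) c e (mu P Q c e z)
  = mu P' Q' c e (hcompMor (SemMor phi) (SemMor psi) c e z).
Proof.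
  destruct (ProfComp_pcls_ex _ _ z) as (d & x & y & ->).
  destruct (quot_ex x) as [s ->], (quot_ex y) as [t ->].
  rewrite mu_pcls, SemMor_cls, hcompMor_pcls, !SemMor_cls, mu_pcls;
    try apply Hphi; try apply Hpsi; auto using CompMor_is_mor, SemMor_is_nat.
  apply cls_eq, CompMor_tens; apply teq_equivalence.
Qed.
End MuNatural.

Lemma finite_type_sigT {A : Type} {B : A -> Type} :
  finite_type A -> (forall a, finite_type (B a)) -> finite_type {a & B a}.
Proof.
  intros [lA HA] HB.
  set (lB a := proj1_sig (constructive_indefinite_description _ (HB a))).
  exists (flat_map (fun a => map (existT B a) (lB a)) lA); intros [a b].
  apply in_flat_map; exists a; split; [apply HA | apply in_map].
  exact (proj2_sig (constructive_indefinite_description _ (HB a)) b).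
Qed.

Lemma finite_type_sum {A B : Type} : finite_type A -> finite_type B -> finite_type (A + B).
Proof.
  intros [lA HA] [lB HB]; exists (map inl lA ++ map inr lB).
  intros [a|b]; apply in_or_app; [left | right]; apply in_map; auto.
Qed.

Lemma CompCurr_finite {C D E : CatPres} (P : Curr C D) (Q : Curr D E) :
  finite_curr P -> finite_curr Q -> finite_curr (CompCurr P Q).
Proof.
  intros (HC & HD & HPc) (_ & HE & HQd); split; [exact HC | split; [exact HE | intro c]].
  split; simpl.
  - apply finite_type_sigT; [apply HPc | intro; apply HQd].
  - apply finite_type_sum; apply finite_type_sigT; try apply HPc; intro; apply HQd.
Qed.

Lemma fin_curr_presentable_ProfComp {C D E : CatPres} (PP : Prof C D) (QQ : Prof D E) :
  is_prof PP -> is_prof QQ -> fin_curr_presentable PP -> fin_curr_presentable QQ ->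
  fin_curr_presentable (ProfComp PP QQ).
Proof.
  intros HPP HQQ (R & HR & FR & HRP) (S & HS & FS & HSQ).
  exists (CompCurr R S); split; [apply CompCurr_is_curr; auto |].
  split; [apply CompCurr_finite; auto |].
  apply (prof_iso_trans _ (ProfComp (SemProf R) (SemProf S))).
  - apply prof_iso_sym; exists (mu R S); apply mu_is_iso; auto.
  - apply prof_iso_ProfComp; auto using SemProf_is_prof.
Qed.

Theorem mainTheorem10 (C D E : CatPres) :
  (forall (P : Curr C D) (Q : Curr D E), is_curr P -> is_curr Q ->
     is_curr (CompCurr P Q) /\
     (forall c d e (s : term (Pob P c) d) (t : term (Pob Q d) e),
        mu P Q c e (pcls (SemProf P) (SemProf Q) (cls (teq (Pob P c) d) s)
                                                 (cls (teq (Pob Q d) e) t))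
        = cls (teq (Pob (CompCurr P Q) c) e) (tens (Pob P c) Q s t)) /\
     is_iso (mu P Q)) /\
  (forall (P P' : Curr C D) (Q Q' : Curr D E) (phi : CurrMor P P') (psi : CurrMor Q Q'),
     is_curr P -> is_curr P' -> is_curr Q -> is_curr Q' ->
     is_curr_mor phi -> is_curr_mor psi ->
     forall c e (z : pobj (ProfComp (SemProf P) (SemProf Q)) c e),
       SemMor (CompMor phi psi) c e (mu P Q c e z)
       = mu P' Q' c e (hcompMor (SemMor phi) (SemMor psi) c e z)) /\
  (forall (P : Curr C D) (Q : Curr D E),
     finite_curr P -> finite_curr Q -> finite_curr (CompCurr P Q)) /\
  (forall (PP : Prof C D) (QQ : Prof D E),
     is_prof PP -> is_prof QQ ->
     fin_curr_presentable PP -> fin_curr_presentable QQ ->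
     fin_curr_presentable (ProfComp PP QQ)).
Proof.
  split; [intros P Q HP HQ; split; [| split] | split; [| split]].
  - apply CompCurr_is_curr; auto.
  - intros; apply mu_pcls; auto.
  - apply mu_is_iso; auto.
  - intros; apply mu_natural; auto.
  - apply CompCurr_finite.
  - apply fin_curr_presentable_ProfComp.
Qed.
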